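(* Let $h$ be the state on $U_n^{nc}$ defined below. For all $r$ (even) and all $1\le i_1,j_1,\dots,i_r,j_r\le n$, $$h(u_{i_1j_1}u^*_{i_2j_2}u_{i_3j_3}u^*_{i_4j_4}\cdots u_{i_{r-1}j_{r-1}}u^*_{i_rj_r})=\tfrac1n\,\delta_{i_1i_2}\delta_{j_2j_3}\delta_{i_3i_4}\cdots\delta_{i_{r-1}i_r}\delta_{j_rj_1},$$ $$h(u^*_{i_1j_1}u_{i_2j_2}u^*_{i_3j_3}u_{i_4j_4}\cdots u^*_{i_{r-1}j_{r-1}}u_{i_rj_r})=\tfrac1n\,\delta_{j_1j_2}\delta_{i_2i_3}\delta_{j_3j_4}\cdots\delta_{j_{r-1}j_r}\delta_{i_ri_1}.$$
   Context: $U_n^{nc}$ is the universal unital $*$-algebra generated by $u_{ij}$ ($1\le i,j\le n$) with $\sum_ku_{ki}^*u_{kj}=\delta_{ij}=\sum_ku_{ik}u_{jk}^*$. Let $H=\ell^2(\mathbb Z)\otimes\bigotimes_{k\in\mathbb Z}M_n(\mathbb C)$, where $M_n(\mathbb C)$ is a Hilbert space with inner product $\langle A,B\rangle=\mathrm{Tr}(A^*B)/n$ and the infinite tensor product is taken with respect to the reference vector $I_n$ (only finitely many factors differ from $I_n$); $(\delta_k)$ is the standard basis of $\ell^2(\mathbb Z)$ and $E_{ij}$ the matrix units. Define bounded operators $U_{ij}$ on $H$ by $U_{ij}(\delta_k\otimes(\cdots\otimes M_{k-1}\otimes M_k\otimes M_{k+1}\otimes\cdots))=\delta_{k+1}\otimes(\cdots\otimes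 M_{k-1}\otimes E_{ji}M_k\otimes M_{k+1}\otimes\cdots)$ (the factor at position $k$ is multiplied), so that $U_{ij}^*(\delta_k\otimes(\cdots\otimes M_{k-1}\otimes\cdots))=\delta_{k-1}\otimes(\cdots\otimes E_{ij}M_{k-1}\otimes M_k\otimes\cdots)$. These satisfy the defining relations of $U_n^{nc}$, so there is a unital $*$-homomorphism $j:U_n^{nc}\to B(H)$, $j(u_{ij})=U_{ij}$. With $\Omega=\delta_0\otimes\bigotimes_kI_n$, define $h(a)=\langle\Omega,j(a)\Omega\rangle$. *)

From HB Require Import structures.
From mathcomp Require Import all_boot all_order all_algebra all_field.
Set Implicit Arguments. Unset Strict Implicit. Unset Printing Implicit Defensive.
Import Order.TTheory GRing.Theory Num.Theory.
Local Open Scope ring_scope.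

(* Elementary tensors  delta_k (x) (tensor_m M_m)  in
   H = l^2(Z) (x) bigotimes_{m in Z} M_n(C)  (reference vector I_n):
   only the factors indexed by et_supp may differ from I_n. *)
Record etensor (n : nat) := ETensor {
  et_pos : int;
  et_fac : int -> 'M[algC]_n;
  et_supp : seq int;
  et_suppP : forall m, m \notin et_supp -> et_fac m = 1%:M }.

Definition mx_inner (n : nat) (A B : 'M[algC]_n) : algC :=
  \tr ((map_mx Num.conj A)^T *m B) / n%:R.

(* inner product of elementary tensors (linear in the second variable);
   factors outside the supports are I_n, with <I_n, I_n> = 1 *)
Definition et_inner (n : nat) (s t : etensor n) : algC :=
  (et_pos s == et_pos t)%:R *
  \prod_(m <- undup (et_supp s ++ et_supp t)) mx_inner (et_fac s m) (et_fac t m).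

Definition Omega (n : nat) : etensor n :=
  @ETensor n 0 (fun _ => 1%:M) [::] (fun _ _ => erefl).

Lemma upd_suppP (n : nat) (t : etensor n) (k : int) (A : 'M[algC]_n) :
  forall m, m \notin k :: et_supp t ->
    (if m == k then A *m et_fac t m else et_fac t m) = 1%:M.
Proof.
move=> m; rewrite in_cons negb_or => /andP[/negbTE -> Hm].
exact: et_suppP.
Qed.

Definition Uop (n : nat) (i j : 'I_n) (t : etensor n) : etensor n :=
  @ETensor n (et_pos t + 1)
    (fun m => if m == et_pos t then delta_mx j i *m et_fac t m else et_fac t m)
    (et_pos t :: et_supp t) (@upd_suppP n t (et_pos t) (delta_mx j i)).

Definition Ustar (n : nat) (i j : 'I_n) (t : etensor n) : etensor n :=
  @ETensor n (et_pos t - 1)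
    (fun m => if m == et_pos t - 1 then delta_mx i j *m et_fac t m else et_fac t m)
    (et_pos t - 1 :: et_supp t) (@upd_suppP n t (et_pos t - 1) (delta_mx i j)).

(* A generator of U_n^nc: (false, i, j) is u_ij, (true, i, j) is u_ij^*. *)
Definition gen_act (n : nat) (x : bool * 'I_n * 'I_n) (t : etensor n) : etensor n :=
  let: (st, i, j) := x in if st then Ustar i j t else Uop i j t.

(* j(x_1 x_2 ... x_r) applied to a vector: x_r acts first *)
Definition word_act (n : nat) (w : seq (bool * 'I_n * 'I_n)) (t : etensor n) :=
  foldr (@gen_act n) t w.

Definition h_word (n : nat) (w : seq (bool * 'I_n * 'I_n)) : algC :=
  et_inner (Omega n) (word_act w (Omega n)).

(* Each generator multiplies one tensor factor by a matrix unit and moves the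
   position by one step; in an alternating word u u^* u u^* ... (or
   u^* u u^* u ...) the position oscillates between two values, so every
   generator hits the same factor.  The word therefore multiplies a single
   factor of Omega by a product of matrix units, which collapses to a product
   of Kronecker deltas times one matrix unit E_ab, and <I_n, E_ab> = [a = b]/n. *)
From HB Require Import structures.
From mathcomp Require Import all_boot all_order all_algebra all_field.
Import Order.TTheory GRing.Theory Num.Theory.
Local Open Scope ring_scope.

Lemma mxtrace_delta n (a b : 'I_n) : \tr (delta_mx a b : 'M[algC]_n) = (a == b)%:R.
Proof.
rewrite /mxtrace (bigD1 a) //= mxE eqxx big1 ?addr0 => [|k /negbTE kn].
  by case: (a == b).
by rewrite mxE; case: eqP kn => // ->; rewrite eqxx.
Qed.

Lemma mx_inner1 n (M : 'M[algC]_n) : mx_inner 1%:M M = \tr M / n%:R.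
Proof. by rewrite /mx_inner map_mx1 trmx1 mul1mx. Qed.

Lemma mx_inner1_scale_delta n (c : algC) (a b : 'I_n) :
  mx_inner 1%:M (c *: delta_mx a b) = n%:R^-1 * c * (b == a)%:R.
Proof. by rewrite mx_inner1 mxtraceZ mxtrace_delta eq_sym mulrC mulrA. Qed.

Lemma et_inner_Omega_local n (t : etensor n) (x : int) : (0 < n)%N ->
  et_pos t = 0 -> (forall y, y != x -> et_fac t y = 1%:M) ->
  et_inner (Omega n) t = mx_inner 1%:M (et_fac t x).
Proof.
move=> n_gt0 t0 tf; have inner11 : mx_inner 1%:M (1%:M : 'M[algC]_n) = 1.
  by rewrite mx_inner1 mxtrace1 divff // pnatr_eq0 -lt0n.
rewrite /et_inner t0 eqxx mul1r /=.
have [x_supp | x_supp] := boolP (x \in undup (et_supp t)).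
  rewrite (bigD1_seq x) ?undup_uniq //= big1 ?mulr1 // => y /tf ->.
  by rewrite inner11.
rewrite big1_seq => [|y /andP[_ y_supp]]; last first.
  by rewrite tf ?inner11 //; apply: contraNneq x_supp => <-.
by rewrite et_suppP ?inner11 // -mem_undup.
Qed.

Section SlotAction.

Variable n : nat.
Implicit Types (s : bool) (a b c d : 'I_n) (w : seq (bool * 'I_n * 'I_n)).

Definition acts_on_slot w (k : int) (M : 'M[algC]_n) :=
  forall t, et_pos (word_act w t) = et_pos t /\
    forall y, et_fac (word_act w t) y =
      if y == et_pos t + k then M *m et_fac t y else et_fac t y.

Lemma acts_on_slot_cat w1 w2 k M1 M2 :
  acts_on_slot w1 k M1 -> acts_on_slot w2 k M2 ->
  acts_on_slot (w1 ++ w2) k (M1 *m M2).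
Proof.
move=> act1 act2 t; rewrite /word_act foldr_cat -!/(word_act _ _).
have [pos2 fac2] := act2 t; have [pos1 fac1] := act1 (word_act w2 t).
split=> [|y]; first by rewrite pos1.
by rewrite fac1 pos2 fac2; case: eqP => //; rewrite mulmxA.
Qed.

Definition gen_unit s a b : 'M[algC]_n := if s then delta_mx a b else delta_mx b a.

(* u u^* returns to its starting position after acting on the factor just
   below it; u^* u acts on the factor at the position itself. *)
Definition pair_slot s : int := if s then 0 else -1.

Lemma acts_on_slot_pair s a b c d :
  acts_on_slot [:: (s, a, b); (~~ s, c, d)] (pair_slot s)
    (gen_unit s a b *m gen_unit (~~ s) c d).
Proof.
move=> t; case: s => /=; rewrite ?addrK ?subrK ?addr0; split=> // y;
  by case: eqP => _ //; rewrite mulmxA.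
Qed.

Definition alt_word s (i j : nat -> 'I_n) (r : nat) :=
  [seq (s (+) odd k, i k.+1, j k.+1) | k <- iota 0 r].

Lemma alt_wordS s (i j : nat -> 'I_n) r :
  alt_word s i j r.+2 =
  [:: (s, i 1%N, j 1%N); (~~ s, i 2%N, j 2%N)] ++
    alt_word s (fun k => i k.+2) (fun k => j k.+2) r.
Proof.
rewrite /alt_word.
have -> : iota 0 r.+2 = [:: 0%N, 1%N & iota (2 + 0) r] by [].
rewrite iotaDl !map_cons -map_comp addbF addbT; congr [:: _, _ & _].
by apply: eq_map => k /=; rewrite negbK.
Qed.

(* E_{a1 b1} E_{b2 a2} E_{a3 b3} ... (length (m+1)*2) collapses to
   [chain_coef a b m] times E_{a1 a_{2m+2}}. *)
Definition chain_coef (a b : nat -> 'I_n) m : algC :=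
  \prod_(1 <= k < (m.+1).*2) (if odd k then (b k == b k.+1)%:R else (a k == a k.+1)%:R).

Lemma chain_coefS (a b : nat -> 'I_n) m :
  chain_coef a b m.+1 = (b 1%N == b 2%N)%:R * ((a 2%N == a 3%N)%:R *
     chain_coef (fun k => a k.+2) (fun k => b k.+2) m).
Proof.
rewrite /chain_coef big_ltn // big_ltn //= -[3%N]/(1 + 2)%N big_addn.
rewrite doubleS subSS; congr (_ * (_ * _)).
by apply: eq_bigr => k _; rewrite addn2 /= negbK.
Qed.

Lemma mul_delta_mx_scale a b c d :
  delta_mx a b *m delta_mx c d = (b == c)%:R *: (delta_mx a d : 'M[algC]_n).
Proof. by rewrite mul_delta_mx_cond scaler_nat. Qed.

Lemma mul_delta_scale a b c d (x : algC) :
  delta_mx a b *m (x *: delta_mx c d) = ((b == c)%:R * x) *: delta_mx a d.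
Proof. by rewrite -scalemxAr mul_delta_mx_scale scalerA mulrC. Qed.

(* With [a := i], [b := j] for words starting with u^*, and [a := j], [b := i]
   for words starting with u, the generators of [alt_word s i j] multiply by
   E_{a1 b1}, E_{b2 a2}, E_{a3 b3}, ... *)
Lemma alt_word_acts s m (i j : nat -> 'I_n) :
  let a := if s then i else j in let b := if s then j else i in
  acts_on_slot (alt_word s i j (m.+1).*2) (pair_slot s)
    (chain_coef a b m *: delta_mx (a 1%N) (a (m.+1).*2)).
Proof.
case: s; elim: m i j => [|m IH] i j /=.
1,3: by rewrite /chain_coef big_nat1 -mul_delta_mx_scale; apply: acts_on_slot_pair.
all: rewrite doubleS alt_wordS chain_coefS -!mul_delta_scale mulmxA.
all: exact: acts_on_slot_cat (acts_on_slot_pair _ _ _ _ _) (IH _ _).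
Qed.

Lemma h_word_alt_word s m (i j : nat -> 'I_n) :
  let a := if s then i else j in let b := if s then j else i in
  h_word (alt_word s i j (m.+1).*2) =
    n%:R^-1 * chain_coef a b m * (a (m.+1).*2 == a 1%N)%:R.
Proof.
have n_gt0 : (0 < n)%N := leq_ltn_trans (leq0n _) (ltn_ord (i 0%N)).
have /(_ (Omega n))[pos fac] := alt_word_acts s m i j.
rewrite /h_word (et_inner_Omega_local _ _ (pair_slot s) n_gt0) //.
  by rewrite fac /= add0r eqxx mulmx1 mx_inner1_scale_delta.
by move=> y /negbTE y_slot; rewrite fac /= add0r y_slot.
Qed.

End SlotAction.

Theorem mainTheorem8 (n m : nat) (i j : nat -> 'I_n) :
  let r := (m.+1).*2 in
  h_word [seq (odd k, i k.+1, j k.+1) | k <- iota 0 r] =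
    n%:R^-1 *
    (\prod_(1 <= a < r) (if odd a then (i a == i a.+1)%:R else (j a == j a.+1)%:R))
    * (j r == j 1%N)%:R
  /\
  h_word [seq (~~ odd k, i k.+1, j k.+1) | k <- iota 0 r] =
    n%:R^-1 *
    (\prod_(1 <= a < r) (if odd a then (j a == j a.+1)%:R else (i a == i a.+1)%:R))
    * (i r == i 1%N)%:R.
Proof.
(* [false (+) odd k] and [true (+) odd k] reduce to [odd k] and [~~ odd k]. *)
split; [exact: (h_word_alt_word n false m i j) | exact: (h_word_alt_word n true m i j)].
Qed.
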